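(* Let $M, K, P, N$ be positive integers with $K \le P$. Let $\mathbf{A} \in \mathbb{R}^{M \times N}$ be any matrix such that each column has at least one nonzero entry. Let $\mathbf{F} \in \mathbb{R}^{P \times N}$ be any matrix such that for every set $\chi \subseteq \{1,\ldots,P\}$ with $|\chi| = K$, the span of the rows of $\mathbf{F}$ indexed by $\chi$ contains the span of the $M$ rows of $\mathbf{A}$. Then the average sparsity $\bar{s}$ over the rows of $\mathbf{F}$ satisfies $$\bar{s} \ge \frac{N}{P}\,(P - K + 1).$$
   Context: The sparsity of a vector is its number of nonzero entries; $\bar{s} = \frac{1}{P}\sum_{i=1}^P \|\mathbf{f}_i\|_0$, where $\mathbf{f}_i^T$ is the $i$-th row of $\mathbf{F}$ and $\|\cdot\|_0$ counts nonzero entries. *)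

From mathcomp Require Import all_boot all_order all_algebra.
Set Implicit Arguments. Unset Strict Implicit. Unset Printing Implicit Defensive.
Import Order.TTheory GRing.Theory Num.Theory.
Local Open Scope ring_scope.

Definition row_sparsity (R : ringType) (P N : nat) (F : 'M[R]_(P, N)) (i : 'I_P) : nat :=
  #|[set j : 'I_N | F i j != 0]|.

Definition avg_sparsity (R : fieldType) (P N : nat) (F : 'M[R]_(P, N)) : R :=
  (\sum_(i < P) row_sparsity F i)%:R / P%:R.

Definition rows_of (R : ringType) (P N : nat) (F : 'M[R]_(P, N)) (chi : {set 'I_P})
  : 'M[R]_(#|chi|, N) :=
  \matrix_(i < #|chi|, j < N) F (enum_val i) j.

From mathcomp Require Import all_boot all_order all_algebra.
From mathcomp Require Import zify.
Set Implicit Arguments. Unset Strict Implicit. Unset Printing Implicit Defensive.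
Import Order.TTheory GRing.Theory Num.Theory.
Local Open Scope ring_scope.

(* Every column of F is nonzero on at least P - K + 1 rows: were it zero on K
   rows chi, every vector of the row space of the submatrix on chi, hence every
   row of A, would vanish in that column.  Counting the nonzero entries of F
   column by column instead of row by row then gives N (P - K + 1). *)

Definition col_support (R : nzRingType) (P N : nat) (F : 'M[R]_(P, N)) (j : 'I_N)
  : {set 'I_P} :=
  [set i | F i j != 0].

Lemma sum_row_sparsity (R : nzRingType) (P N : nat) (F : 'M[R]_(P, N)) :
  (\sum_(i < P) row_sparsity F i = \sum_(j < N) #|col_support F j|)%N.
Proof.
rewrite /row_sparsity /col_support.
under eq_bigr => i _ do rewrite -sum1_card big_mkcond /=.
rewrite exchange_big /=; apply: eq_bigr => j _.
by rewrite -[RHS]sum1_card [RHS]big_mkcond /=; apply: eq_bigr => i _; rewrite !inE.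
Qed.

Lemma subset_of_card (T : finType) (A : {set T}) (k : nat) :
  (k <= #|A|)%N -> exists2 B : {set T}, B \subset A & #|B| = k.
Proof.
move=> le_k_A; exists [set x in take k (enum A)].
  by apply/subsetP => x; rewrite inE => /mem_take; rewrite mem_enum.
rewrite cardsE (card_uniqP _) ?take_uniq ?enum_uniq //.
by rewrite size_take -cardE; case: ltnP => //; lia.
Qed.

Lemma submx_rows_of_col0 (R : fieldType) (M P N : nat)
    (A : 'M[R]_(M, N)) (F : 'M[R]_(P, N)) (chi : {set 'I_P}) (j : 'I_N) :
  {in chi, forall i, F i j = 0} -> (A <= rows_of F chi)%MS ->
  forall k, A k j = 0.
Proof.
move=> F0 /submxP [D ->] k; rewrite mxE big1 // => l _.
by rewrite mxE F0 ?mulr0 // enum_valP.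
Qed.

Lemma col_support_card (R : fieldType) (M K P N : nat)
    (A : 'M[R]_(M, N)) (F : 'M[R]_(P, N)) (j : 'I_N) :
  (K <= P)%N -> (exists k, A k j != 0) ->
  (forall chi : {set 'I_P}, #|chi| = K -> (A <= rows_of F chi)%MS) ->
  (P - K < #|col_support F j|)%N.
Proof.
move=> le_KP [k nzAkj] hF; rewrite ltnNge; apply: contra nzAkj => small_supp.
have le_K_zeros : (K <= #|~: col_support F j|)%N.
  by have := cardsC (col_support F j); rewrite card_ord; lia.
have [chi sub_chi card_chi] := subset_of_card le_K_zeros.
apply/eqP/(submx_rows_of_col0 _ (hF chi card_chi)) => i /(subsetP sub_chi).
by rewrite !inE negbK => /eqP.
Qed.

Theorem theorem2 (R : realFieldType) (M K P N : nat)
  (hM : (0 < M)%N) (hK : (0 < K)%N) (hP : (0 < P)%N) (hN : (0 < N)%N)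
  (hKP : (K <= P)%N)
  (A : 'M[R]_(M, N)) (F : 'M[R]_(P, N))
  (hA : forall j : 'I_N, exists i : 'I_M, A i j != 0)
  (hF : forall chi : {set 'I_P}, #|chi| = K -> (A <= rows_of F chi)%MS) :
  avg_sparsity F >= (N%:R / P%:R) * (P - K + 1)%:R.
Proof.
rewrite /avg_sparsity mulrAC -natrM ler_wpM2r ?invr_ge0 ?ler0n // ler_nat.
rewrite sum_row_sparsity -[X in (X * _)%N]card_ord -sum_nat_const.
by apply: leq_sum => j _; rewrite addn1; exact: col_support_card.
Qed.
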